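(* Let $f,g$ be packed words of length $n$. Then $g\leq f$ if, and only if, $g$ is a (strict) T-partition of the topology $\mathcal{T}_f$.
   Context: $[n]=\{1,\ldots,n\}$. A packed word of length $n$ is a word $f=f(1)\ldots f(n)$ of positive integers with $\{f(1),\ldots,f(n)\}=\{1,\ldots,\max f\}$. For packed words $f,g$ of the same length $n$, $g\leq f$ means: for all $i,j\in[n]$, $f(i)\leq f(j)\Rightarrow g(i)\leq g(j)$; $f(i)>f(j)$ and $i<j$ $\Rightarrow g(i)>g(j)$; $f(i)=f(j)\Rightarrow g(i)=g(j)$. For a packed word $f$ of length $n$, $\mathcal{T}_f$ is the topology on $[n]$ whose associated preorder is $i\leq j$ iff $f(i)\leq f(j)$ (its open sets are $\emptyset$ and the sets $f^{-1}(\{i,\ldots,\max f\})$). For a topology $\mathcal{T}$ on $[n]$: $i\leq_{\mathcal{T}}j$ iff every open set containing $i$ contains $j$; $i\sim_{\mathcal{T}}j$ iff $i\leq_{\mathcal{T}}j$ and $j\leq_{\mathcal{T}}i$; $i<_{\mathcal{T}}j$ iff $i\leq_{\mathcal{T}}j$ and not $j\leq_{\mathcal{T}}i$. A (strict) T-partition of $\mathcal{T}$ is a packed word $g$ of length $n$ (viewed as a surjection $[n]\to[\max g]$) such that: $i\leq_{\mathcal{T}}j\Rightarrow g(i)\leq g(j)$; $i<_{\mathcal{T}}j$ and $i>j$ $\Rightarrow g(i)<g(j)$; and if $i<j<k$, $i\sim_{\mathcal{T}}k$ and $g(i)=g(j)=g(k)$, then $i\sim_{\mathcal{T}}j$ and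 $j\sim_{\mathcal{T}}k$. *)

(* Positions [n] = {1..n} are modelled by 'I_n (0-based, same order). *)
From mathcomp Require Import all_boot.
Set Implicit Arguments. Unset Strict Implicit. Unset Printing Implicit Defensive.

(* max f (0 for the empty word) *)
Definition wmax n (f : 'I_n -> nat) : nat := \max_(i < n) f i.

Definition packed n (f : 'I_n -> nat) : Prop :=
  (forall i, 0 < f i) /\ (forall k, 1 <= k <= wmax f -> exists i, f i = k).

Definition wle n (g f : 'I_n -> nat) : Prop :=
  forall i j : 'I_n,
    (f i <= f j -> g i <= g j) /\
    (f j < f i -> (i < j)%N -> g j < g i) /\
    (f i = f j -> g i = g j).

Definition topf n (f : 'I_n -> nat) : {set {set 'I_n}} :=
  set0 |: [set [set x | (k : nat) <= f x] | k : 'I_(wmax f).+1 & 0 < k].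

Definition leT n (T : {set {set 'I_n}}) (i j : 'I_n) : Prop :=
  forall U, U \in T -> i \in U -> j \in U.
Definition simT n (T : {set {set 'I_n}}) i j : Prop := leT T i j /\ leT T j i.
Definition ltT n (T : {set {set 'I_n}}) i j : Prop := leT T i j /\ ~ leT T j i.

Definition Tpartition n (T : {set {set 'I_n}}) (g : 'I_n -> nat) : Prop :=
  packed g /\
  (forall i j, leT T i j -> g i <= g j) /\
  (forall i j, ltT T i j -> (j < i)%N -> g i < g j) /\
  (forall i j k : 'I_n, (i < j)%N -> (j < k)%N -> simT T i k ->
       g i = g j -> g j = g k -> simT T i j /\ simT T j k).

From mathcomp Require Import all_boot.

Set Implicit Arguments.
Unset Strict Implicit.
Unset Printing Implicit Defensive.

(* The open sets of [topf f] are the upper level sets of [f], so its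
   specialisation preorder is exactly the preorder [f i <= f j]; the three
   T-partition axioms then translate one by one into the conditions of [wle].
   For the third axiom: if [g] is constant on [i < j < k] with [f i = f k],
   a strict descent of [f] at [i -> j] or at [j -> k] would force a strict
   descent of [g] there. *)

Section TopfPreorder.

Variables (n : nat) (f : 'I_n -> nat).
Hypothesis f_gt0 : forall i, 0 < f i.

Lemma leT_topf (i j : 'I_n) : leT (topf f) i j <-> f i <= f j.
Proof.
split=> [le_ij | le_fij U].
- have fi_le_max : f i < (wmax f).+1 by rewrite ltnS /wmax (leq_bigmax i).
  have := le_ij [set x | f i <= f x]; rewrite !inE leqnn; apply=> //.
  apply/orP; right; apply/imsetP.
  by exists (Ordinal fi_le_max); rewrite // inE f_gt0.
- case/setU1P=> [-> | /imsetP[k _ ->]]; first by rewrite inE.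
  by rewrite !inE => /leq_trans; apply.
Qed.

Lemma simT_topf (i j : 'I_n) : simT (topf f) i j <-> f i = f j.
Proof.
split=> [[/leT_topf le_ij /leT_topf le_ji] | fij].
  by apply/eqP; rewrite eqn_leq le_ij le_ji.
by split; apply/leT_topf; rewrite fij.
Qed.

Lemma ltT_topf (i j : 'I_n) : ltT (topf f) i j <-> f i < f j.
Proof.
split=> [[_ /leT_topf] | lt_fij]; first by rewrite ltnNge => /negP.
by split=> [|/leT_topf]; [apply/leT_topf/ltnW | rewrite leqNgt lt_fij].
Qed.

End TopfPreorder.

Section WleTriples.

Variables (n : nat) (f g : 'I_n -> nat).
Hypothesis gf : wle g f.

Lemma wle_const_triple (i j k : 'I_n) :
  (i < j)%N -> (j < k)%N -> f i = f k -> g i = g j -> g j = g k -> f i = f j.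
Proof.
move=> lt_ij lt_jk fik gij gjk.
case: (ltngtP (f i) (f j)) => // [lt_fij | lt_fji].
- have [_ [desc_jk _]] := gf j k.
  by have := desc_jk _ lt_jk; rewrite -fik gjk ltnn => /(_ lt_fij).
- have [_ [desc_ij _]] := gf i j.
  by have := desc_ij lt_fji lt_ij; rewrite gij ltnn.
Qed.

End WleTriples.

Theorem lemma18 (n : nat) (f g : 'I_n -> nat) :
  packed f -> packed g -> (wle g f <-> Tpartition (topf f) g).
Proof.
move=> [f_gt0 _] pg.
have leTf := leT_topf f_gt0; have ltTf := ltT_topf f_gt0.
have simTf := simT_topf f_gt0.
split=> [gf | [_ [mono [desc _]]] i j].
- split=> //; split; [|split].
  + by move=> i j /leTf; case: (gf i j).
  + by move=> i j /ltTf lt_fij lt_ji; case: (gf j i) => _ [/(_ lt_fij lt_ji)].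
  + move=> i j k lt_ij lt_jk /simTf fik gij gjk.
    have fij := wle_const_triple gf lt_ij lt_jk fik gij gjk.
    by split; apply/simTf; rewrite -?fik -fij.
- split; [|split].
  + by move/leTf; apply: mono.
  + by move=> lt_fji lt_ij; apply: desc => //; apply/ltTf.
  + by move=> fij; apply/eqP; rewrite eqn_leq !mono //; apply/leTf; rewrite fij.
Qed.
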